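(* For $n\ge3$ let $C_n$ be the cycle graph with $n$ vertices and let $\mathbb{Z}$ be the one-dimensional integer lattice (the 2-regular graph on $\mathbb{Z}$ with edges $\{k,k+1\}$). Let $\mu$ be the probability measure on $[0,4]$ that is the image of the normalized Lebesgue measure $\frac{dx}{2\pi}$ on $[0,2\pi)$ under the map $x\mapsto 2(1-\cos x)$ (the spectral measure of the Laplacian of $\mathbb{Z}$). Then for every complex $u$ with $|u|<1$, \[ \lim_{n\to\infty}\zeta_{C_n}(u)^{-1}=\zeta_{\mathbb{Z}}(u)^{-1}=\exp\Big(\int\log(1-2u+u^2+\lambda u)\,d\mu(\lambda)\Big), \] where $\log$ is the principal branch.
   Context: For a vertex transitive $(q+1)$-regular graph $G$ and a fixed vertex $x_0$, the generalized Ihara zeta function is $\zeta_G(u)=\exp\big(\sum_{m\ge1}\frac{N^0_m}{m}u^m\big)$, where $N^0_m$ is the number of reduced $x_0$-cycles of length $m$ in $G$. Here a path of length $m$ is a sequence $(e_1,\ldots,e_m)$ of oriented edges with the terminus of $e_i$ equal to the origin of $e_{i+1}$; it has a backtracking if $e_{i+1}=e_i^{-1}$ for some $i$ (the reversed arc); an $x_0$-cycle is a path starting and ending at $x_0$; it has a tail if $e_m=e_1^{-1}$; it is reduced if it has neither a backtracking nor a tail. *)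

From Stdlib Require Import Reals List ZArith Arith Bool.
From Coquelicot Require Import Coquelicot.
Import ListNotations.
Open Scope R_scope.
Open Scope bool_scope.

(* A locally finite simple graph is given by its vertex type V, a boolean
   equality eqb on V and the neighbour list nb x of each vertex x.
   The oriented edges are the pairs (x,y) with y in nb x, so a path
   (e_1,...,e_m) of length m is the same as a vertex sequence
   [v_0; v_1; ...; v_m] with v_{i+1} in nb v_i, e_i = (v_{i-1}, v_i). *)

Fixpoint walks {V : Type} (nb : V -> list V) (x : V) (m : nat) : list (list V) :=
  match m with
  | O => [[x]]
  | S m' => flat_map (fun y => map (cons x) (walks nb y m')) (nb x)
  end.

(* no backtracking: e_{i+1} <> e_i^{-1}, i.e. v_{i+1} <> v_{i-1} *)
Fixpoint no_backtrack {V : Type} (eqb : V -> V -> bool) (l : list V) : bool :=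
  match l with
  | a :: ((b :: c :: _) as t) => negb (eqb a c) && no_backtrack eqb t
  | _ => true
  end.

(* the x0-cycle [v_0;...;v_m] (v_0 = v_m = x0) has a tail iff
   e_m = e_1^{-1}, i.e. v_{m-1} = v_1 *)
Definition has_tail {V : Type} (eqb : V -> V -> bool) (x0 : V) (m : nat)
    (l : list V) : bool :=
  eqb (nth (m - 1) l x0) (nth 1 l x0).

Definition is_x0_cycle {V : Type} (eqb : V -> V -> bool) (x0 : V) (m : nat)
    (l : list V) : bool :=
  eqb (nth 0 l x0) x0 && eqb (nth m l x0) x0.

Definition N0 {V : Type} (nb : V -> list V) (eqb : V -> V -> bool) (x0 : V)
    (m : nat) : nat :=
  length (filter (fun l => is_x0_cycle eqb x0 m l && no_backtrack eqb l
                           && negb (has_tail eqb x0 m l))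
                 (walks nb x0 m)).

Definition Cexp (z : C) : C := (exp (Re z) * cos (Im z), exp (Re z) * sin (Im z)).

Definition Carg (z : C) : R :=
  if Rle_dec 0 (Im z) then acos (Re z / Cmod z) else - acos (Re z / Cmod z).

Definition Clog (z : C) : C := (ln (Cmod z), Carg z).

Definition CSeries (a : nat -> C) : C :=
  (Series (fun k => Re (a k)), Series (fun k => Im (a k))).

Definition ihara_zeta {V : Type} (nb : V -> list V) (eqb : V -> V -> bool)
    (x0 : V) (u : C) : C :=
  Cexp (CSeries (fun m => match m with
                          | O => 0%C
                          | S _ => ((INR (N0 nb eqb x0 m) / INR m)%R : C) * Cpow u m
                          end)%C).

Definition cycle_nb (n : nat) (k : nat) : list nat :=
  [ (k + 1) mod n ; (k + n - 1) mod n ]%nat.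

Definition Z_nb (k : Z) : list Z := [ (k + 1)%Z ; (k - 1)%Z ].

(* integral against the spectral measure mu of Z, the image of dx/(2 pi) on
   [0, 2 pi) under x |-> 2 (1 - cos x):  int f dmu = (1/2pi) int_0^{2pi} f(2(1-cos x)) dx *)
Definition mu_integral (f : R -> C) : C :=
  scal (/ (2 * PI)) (RInt (V := C_R_CompleteNormedModule)
                          (fun x => f (2 * (1 - cos x))) 0 (2 * PI)).

(* On a 2-regular graph a non-backtracking walk never changes direction, so there
   are at most two reduced x0-cycles of each length: none at all on Z, and none of
   length < n on C_n.  Hence zeta_Z = 1, while the exponent of zeta_{C_n}(u) is
   O(1 / (n (1 - |u|))).  For the integral, with lambda = 2 (1 - cos x),
   1 - 2u + u^2 + lambda u = (1 - u e^{ix}) (1 - u e^{-ix}), both factors lying in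
   the right half-plane; so its principal logarithm is - sum_k 2 cos (k x) u^k / k,
   uniformly in x, and every term integrates to 0 over [0, 2 pi]. *)

From Pilot Require Import Defs.
From Stdlib Require Import Reals List ZArith Arith Lia Lra.
From Coquelicot Require Import Coquelicot.
Import ListNotations.
Open Scope R_scope.

Lemma filter_map_cons {A : Type} (P : list A -> bool) (x : A) (L : list (list A)) :
  filter P (map (cons x) L) = map (cons x) (filter (fun l => P (x :: l)) L).
Proof.
  induction L as [|a L IH]; simpl; [reflexivity|].
  destruct (P (x :: a)); simpl; now rewrite IH.
Qed.

Lemma filter_filter_weaker {A : Type} (f g : A -> bool) (L : list A) :
  (forall a, f a = true -> g a = true) -> filter f (filter g L) = filter f L.
Proof.
  intros Hfg; induction L as [|a L IH]; simpl; [reflexivity|].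
  destruct (f a) eqn:Ef.
  - rewrite (Hfg a Ef); simpl; now rewrite Ef, IH.
  - destruct (g a); simpl; rewrite ?Ef; exact IH.
Qed.

Lemma filter_andb_mid {A : Type} (a b c : A -> bool) (L : list A) :
  filter (fun l => a l && b l && c l) L = filter (fun l => a l && c l) (filter b L).
Proof.
  induction L as [|x L IH]; simpl; [reflexivity|].
  destruct (b x); simpl; destruct (a x), (c x); simpl; now rewrite ?IH.
Qed.

Section TwoRegular.

Context {V : Type} (eqb : V -> V -> bool) (eqb_spec : forall a b, eqb a b = true <-> a = b)
  (nb : V -> list V) (D : V -> Prop) (s p : V -> V).
Hypothesis nb_def : forall x, D x -> nb x = [s x; p x].
Hypothesis D_s : forall x, D x -> D (s x).
Hypothesis D_p : forall x, D x -> D (p x).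
Hypothesis p_s : forall x, D x -> p (s x) = x.
Hypothesis s_p : forall x, D x -> s (p x) = x.
Hypothesis s_s : forall x, D x -> s (s x) <> x.
Hypothesis p_p : forall x, D x -> p (p x) <> x.

Fixpoint iter_walk (f : V -> V) (x : V) (m : nat) : list V :=
  match m with O => [x] | S m' => x :: iter_walk f (f x) m' end.

Lemma nth_iter_walk f x m d : nth m (iter_walk f x m) d = Nat.iter m f x.
Proof.
  revert x; induction m as [|m IH]; intros x; simpl; [reflexivity|].
  now rewrite IH, <- Nat.iter_succ_r.
Qed.

Lemma eqb_neq x y : x <> y -> eqb x y = false.
Proof.
  intros Hxy; destruct (eqb x y) eqn:E; [|reflexivity].
  now apply eqb_spec in E.
Qed.

Lemma no_backtrack_cons x l : no_backtrack eqb (x :: l) = true -> no_backtrack eqb l = true.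
Proof.
  destruct l as [|a [|b r]]; simpl; auto.
  now intros [_ H]%andb_prop.
Qed.

Lemma no_backtrack_iter_walk f x m :
  (forall y, D y -> D (f y)) -> (forall y, D y -> f (f y) <> y) -> D x ->
  no_backtrack eqb (iter_walk f x m) = true.
Proof.
  intros Df ff; revert x; induction m as [|[|m] IH]; intros x Dx; [reflexivity|reflexivity|].
  assert (Hxx : eqb x (f (f x)) = false).
  { apply eqb_neq; intros E; apply (ff x Dx); now symmetry. }
  specialize (IH (f x) (Df x Dx)).
  destruct m; simpl in *; now rewrite Hxx, ?IH.
Qed.

Lemma backtrack_turn f g x m : g (f x) = x ->
  no_backtrack eqb (x :: iter_walk g (f x) (S m)) = false.
Proof.
  intros gf.
  assert (Hxx : eqb x x = true) by now apply eqb_spec.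
  destruct m; simpl; now rewrite gf, Hxx.
Qed.

Lemma walks_no_backtrack m x : D x ->
  filter (no_backtrack eqb) (walks nb x (S m)) = [iter_walk s x (S m); iter_walk p x (S m)].
Proof.
  revert x; induction m as [|m IH]; intros x Dx.
  - simpl; now rewrite nb_def.
  - change (walks nb x (S (S m))) with
      (flat_map (fun y => map (cons x) (walks nb y (S m))) (nb x)).
    rewrite nb_def by exact Dx; cbn [flat_map].
    rewrite app_nil_r, filter_app, !filter_map_cons.
    rewrite <- (filter_filter_weaker _ (no_backtrack eqb) (walks nb (s x) _)),
            <- (filter_filter_weaker _ (no_backtrack eqb) (walks nb (p x) _))
      by (intros l; apply no_backtrack_cons).
    rewrite !IH by auto; cbn [filter].
    change (x :: iter_walk s (s x) (S m)) with (iter_walk s x (S (S m))).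
    change (x :: iter_walk p (p x) (S m)) with (iter_walk p x (S (S m))).
    rewrite !no_backtrack_iter_walk, !backtrack_turn by auto.
    reflexivity.
Qed.

Lemma N0_two_regular_le2 x0 m : D x0 -> (Defs.N0 nb eqb x0 (S m) <= 2)%nat.
Proof.
  intros Dx0; unfold Defs.N0.
  rewrite filter_andb_mid, walks_no_backtrack by exact Dx0; simpl.
  destruct (_ && _), (_ && _); simpl; lia.
Qed.

Lemma N0_two_regular_eq0 x0 m : D x0 ->
  Nat.iter (S m) s x0 <> x0 -> Nat.iter (S m) p x0 <> x0 -> Defs.N0 nb eqb x0 (S m) = 0%nat.
Proof.
  intros Dx0 Hs Hp; unfold Defs.N0.
  rewrite filter_andb_mid, walks_no_backtrack by exact Dx0.
  unfold is_x0_cycle; cbn [filter]; rewrite !nth_iter_walk.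
  now rewrite (eqb_neq _ _ Hs), (eqb_neq _ _ Hp), !Bool.andb_false_r.
Qed.

End TwoRegular.

Section CycleGraph.

Variable n : nat.
Hypothesis n_ge3 : (3 <= n)%nat.

Let succ k := ((k + 1) mod n)%nat.
Let pred k := ((k + n - 1) mod n)%nat.

Lemma cycle_succ_spec k : (k < n)%nat -> succ k = if (k + 1 =? n)%nat then 0%nat else (k + 1)%nat.
Proof.
  intros Hk; unfold succ; destruct (Nat.eqb_spec (k + 1) n) as [->|Hne].
  - apply Nat.Div0.mod_same.
  - apply Nat.mod_small; lia.
Qed.

Lemma cycle_pred_spec k : (k < n)%nat -> pred k = if (k =? 0)%nat then (n - 1)%nat else (k - 1)%nat.
Proof.
  intros Hk; unfold pred; destruct (Nat.eqb_spec k 0) as [->|Hne].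
  - apply Nat.mod_small; lia.
  - replace (k + n - 1)%nat with ((k - 1) + 1 * n)%nat by lia.
    rewrite Nat.Div0.mod_add; apply Nat.mod_small; lia.
Qed.

Ltac cycle_arith :=
  intros; repeat (rewrite ?cycle_succ_spec, ?cycle_pred_spec by
                    (rewrite ?cycle_succ_spec, ?cycle_pred_spec by lia;
                     repeat case Nat.eqb_spec; lia));
  repeat case Nat.eqb_spec; lia.

Lemma iter_cycle_succ m : Nat.iter m succ 0%nat = (m mod n)%nat.
Proof.
  induction m as [|m IH]; [now rewrite Nat.Div0.mod_0_l|].
  rewrite Nat.iter_succ, IH; unfold succ.
  rewrite Nat.Div0.add_mod_idemp_l; f_equal; lia.
Qed.

Lemma iter_cycle_pred m : Nat.iter m pred 0%nat = ((m * (n - 1)) mod n)%nat.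
Proof.
  induction m as [|m IH]; [now rewrite Nat.Div0.mod_0_l|].
  rewrite Nat.iter_succ, IH; unfold pred.
  replace ((m * (n - 1)) mod n + n - 1)%nat with ((m * (n - 1)) mod n + (n - 1))%nat by lia.
  rewrite Nat.Div0.add_mod_idemp_l; f_equal; lia.
Qed.

Lemma cycle_N0_le2 m : (Defs.N0 (cycle_nb n) Nat.eqb 0%nat (S m) <= 2)%nat.
Proof.
  apply (N0_two_regular_le2 Nat.eqb Nat.eqb_eq _ (fun k => k < n)%nat succ pred);
    try reflexivity; cycle_arith.
Qed.

Lemma cycle_N0_short m : (S m < n)%nat -> Defs.N0 (cycle_nb n) Nat.eqb 0%nat (S m) = 0%nat.
Proof.
  intros Hm.
  apply (N0_two_regular_eq0 Nat.eqb Nat.eqb_eq _ (fun k => k < n)%nat succ pred);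
    try reflexivity; try cycle_arith.
  - rewrite iter_cycle_succ, Nat.mod_small; lia.
  - rewrite iter_cycle_pred.
    replace (S m * (n - 1))%nat with ((n - S m) + m * n)%nat by nia.
    rewrite Nat.Div0.mod_add, Nat.mod_small; lia.
Qed.

End CycleGraph.

Lemma Z_N0 m : Defs.N0 Z_nb Z.eqb 0%Z (S m) = 0%nat.
Proof.
  assert (Hsucc : forall k, Nat.iter k (fun z => (z + 1)%Z) 0%Z = Z.of_nat k).
  { induction k as [|k IH]; [reflexivity|]. rewrite Nat.iter_succ, IH; lia. }
  assert (Hpred : forall k, Nat.iter k (fun z => (z - 1)%Z) 0%Z = (- Z.of_nat k)%Z).
  { induction k as [|k IH]; [reflexivity|]. rewrite Nat.iter_succ, IH; lia. }
  apply (N0_two_regular_eq0 Z.eqb Z.eqb_eq Z_nb (fun _ => True)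
           (fun z => (z + 1)%Z) (fun z => (z - 1)%Z)); try (intros; reflexivity || lia).
  - rewrite Hsucc; lia.
  - rewrite Hpred; lia.
Qed.

Lemma sin_cos_sq t : sin t ^ 2 + cos t ^ 2 = 1.
Proof. pose proof (sin2_cos2 t) as E; unfold Rsqr in E; lra. Qed.

Lemma im_le_Cmod z : Rabs (Im z) <= Cmod z.
Proof. exact (Rle_trans _ _ _ (Rmax_r _ _) (Rmax_Cmod z)). Qed.

Lemma Clog_polar r t : 0 < r -> - PI < t <= PI -> Clog (r * cos t, r * sin t) = (ln r, t).
Proof.
  intros Hr Ht; unfold Clog, Carg, Cmod, Re, Im; cbn [fst snd].
  replace ((r * cos t) ^ 2 + (r * sin t) ^ 2) with (r ^ 2 * (sin t ^ 2 + cos t ^ 2)) by ring.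
  rewrite sin_cos_sq, Rmult_1_r, sqrt_pow2 by lra.
  replace (r * cos t / r) with (cos t) by (field; lra).
  destruct (Rle_dec 0 (r * sin t)) as [Hs|Hs]; f_equal.
  - apply acos_cos; split; [|lra].
    destruct (Rle_dec 0 t) as [|Hneg]; [assumption|].
    assert (sin t < 0) by (apply sin_lt_0_var; lra); nra.
  - assert (Hneg : t < 0).
    { destruct (Rlt_dec t 0) as [|Hpos]; [assumption|].
      assert (0 <= sin t) by (apply sin_ge_0; lra); nra. }
    rewrite <- cos_neg, acos_cos by lra; ring.
Qed.

Lemma Cmod_gt0_of_fst z : 0 < fst z -> 0 < Cmod z.
Proof. intros H; unfold Cmod; apply sqrt_lt_R0; nra. Qed.

Definition arg_rhp (z : C) : R := atan (snd z / fst z).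

Lemma polar_rhp z : 0 < fst z -> z = (Cmod z * cos (arg_rhp z), Cmod z * sin (arg_rhp z)).
Proof.
  destruct z as [x y]; unfold arg_rhp; cbn [fst snd]; intros Hx.
  rewrite cos_atan, sin_atan.
  assert (Hsq : 0 < sqrt (1 + (y / x)²)).
  { apply sqrt_lt_R0; pose proof (Rle_0_sqr (y / x)); lra. }
  assert (Hmod : Cmod (x, y) = x * sqrt (1 + (y / x)²)).
  { unfold Cmod; cbn [fst snd].
    replace (x ^ 2 + y ^ 2) with ((x * x) * (1 + (y / x)²)) by (unfold Rsqr; field; lra).
    rewrite sqrt_mult_alt, sqrt_square by nra; reflexivity. }
  rewrite Hmod; f_equal; field; lra.
Qed.

Lemma arg_rhp_bound z : - PI / 2 < arg_rhp z < PI / 2.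
Proof. apply atan_bound. Qed.

Definition log_rhp (z : C) : C := (ln (Cmod z), arg_rhp z).

Lemma Clog_rhp z : 0 < fst z -> Clog z = log_rhp z.
Proof.
  intros Hz; rewrite (polar_rhp z Hz) at 1.
  pose proof (arg_rhp_bound z); pose proof PI_RGT_0.
  apply Clog_polar; [now apply Cmod_gt0_of_fst | lra].
Qed.

(* Arguments in (-pi/2, pi/2) add up without leaving the principal range. *)
Lemma Clog_mult_rhp z1 z2 : 0 < fst z1 -> 0 < fst z2 -> Clog (z1 * z2) = (Clog z1 + Clog z2)%C.
Proof.
  intros H1 H2; rewrite (Clog_rhp z1 H1), (Clog_rhp z2 H2).
  rewrite (polar_rhp z1 H1) at 1; rewrite (polar_rhp z2 H2) at 1.
  pose proof (Cmod_gt0_of_fst z1 H1); pose proof (Cmod_gt0_of_fst z2 H2).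
  pose proof (arg_rhp_bound z1); pose proof (arg_rhp_bound z2); pose proof PI_RGT_0.
  replace (Cmult (Cmod z1 * cos (arg_rhp z1), Cmod z1 * sin (arg_rhp z1))
                 (Cmod z2 * cos (arg_rhp z2), Cmod z2 * sin (arg_rhp z2)))
    with (Cmod z1 * Cmod z2 * cos (arg_rhp z1 + arg_rhp z2),
          Cmod z1 * Cmod z2 * sin (arg_rhp z1 + arg_rhp z2))
    by (unfold Cmult; cbn [fst snd]; rewrite cos_plus, sin_plus; f_equal; ring).
  rewrite Clog_polar by nra; unfold log_rhp, Cplus; cbn [fst snd].
  now rewrite ln_mult.
Qed.

Definition is_derive_C (F : R -> C) (t : R) (l : C) : Prop :=
  is_derive (fun s => fst (F s)) t (fst l) /\ is_derive (fun s => snd (F s)) t (snd l).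

Lemma is_derive_C_plus F G t l1 l2 :
  is_derive_C F t l1 -> is_derive_C G t l2 -> is_derive_C (fun s => F s + G s)%C t (l1 + l2)%C.
Proof.
  intros [F1 F2] [G1 G2]; split.
  - exact (is_derive_plus (fun s => fst (F s)) (fun s => fst (G s)) _ _ _ F1 G1).
  - exact (is_derive_plus (fun s => snd (F s)) (fun s => snd (G s)) _ _ _ F2 G2).
Qed.

Lemma is_derive_C_real_scal (g : R -> R) t g' c :
  is_derive g t g' -> is_derive_C (fun s => RtoC (g s) * c)%C t (RtoC g' * c)%C.
Proof.
  intros Hg; split.
  - apply (is_derive_ext (fun s => fst c * g s)); [intros s; simpl; ring|].
    replace (fst (RtoC g' * c)%C) with (fst c * g') by (simpl; ring).
    now apply is_derive_scal.
  - apply (is_derive_ext (fun s => snd c * g s)); [intros s; simpl; ring|].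
    replace (snd (RtoC g' * c)%C) with (snd c * g') by (simpl; ring).
    now apply is_derive_scal.
Qed.

Lemma Rabs_sub_le_of_derive_01 (f df : R -> R) M :
  (forall t, 0 <= t <= 1 -> is_derive f t (df t)) ->
  (forall t, 0 <= t <= 1 -> Rabs (df t) <= M) -> Rabs (f 1 - f 0) <= M.
Proof.
  intros Hf Hdf.
  destruct (MVT_gen f 0 1 df) as [c [Hc ->]];
    rewrite ?Rmin_left, ?Rmax_right in * by lra.
  - intros x Hx; apply Hf; lra.
  - intros x Hx; apply continuity_pt_filterlim, (ex_derive_continuous f).
    exists (df x); apply Hf; lra.
  - rewrite Rminus_0_r, Rmult_1_r; apply Hdf; lra.
Qed.

Lemma components_le_of_derive_C_01 (F F' : R -> C) M :
  (forall t, 0 <= t <= 1 -> is_derive_C F t (F' t)) ->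
  (forall t, 0 <= t <= 1 -> Cmod (F' t) <= M) ->
  Rabs (fst (F 1) - fst (F 0)) <= M /\ Rabs (snd (F 1) - snd (F 0)) <= M.
Proof.
  intros HF HM; split.
  - apply (Rabs_sub_le_of_derive_01 (fun t => fst (F t)) (fun t => fst (F' t))); [apply HF|].
    intros t Ht; eapply Rle_trans; [apply re_le_Cmod|now apply HM].
  - apply (Rabs_sub_le_of_derive_01 (fun t => snd (F t)) (fun t => snd (F' t))); [apply HF|].
    intros t Ht; eapply Rle_trans; [apply im_le_Cmod|now apply HM].
Qed.

(* [log_partial w t N] is the N-th partial sum of [- log (1 - t w) = sum_k (t w)^k / k]. *)
Fixpoint log_partial (w : C) (t : R) (N : nat) : C :=
  match N with
  | O => 0%C
  | S N' => (log_partial w t N' + RtoC (t ^ S N' / INR (S N')) * w ^ S N')%C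
  end.

Fixpoint geom_partial (w : C) (t : R) (N : nat) : C :=
  match N with
  | O => 0%C
  | S N' => (geom_partial w t N' + RtoC (t ^ N') * w ^ S N')%C
  end.

Lemma log_partial_at_0 w N : log_partial w 0 N = 0%C.
Proof.
  induction N as [|N IH]; [reflexivity|]; cbn [log_partial]; rewrite IH.
  rewrite pow_i by lia; unfold Rdiv; rewrite Rmult_0_l.
  unfold RtoC, Cmult, Cplus; simpl; f_equal; ring.
Qed.

Lemma is_derive_C_log_partial w t N :
  is_derive_C (fun s => log_partial w s N) t (geom_partial w t N).
Proof.
  induction N as [|N IH].
  - split; simpl; apply (is_derive_const (K := R_AbsRing) (V := R_NormedModule)).
  - apply is_derive_C_plus; [exact IH|].
    apply is_derive_C_real_scal.
    assert (HN : INR (S N) <> 0) by (apply not_0_INR; discriminate).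
    auto_derive; [exact I|].
    change (match N with 0%nat => 1 | S _ => INR N + 1 end) with (INR (S N)).
    field; exact HN.
Qed.

Lemma RtoC_pow t N : RtoC (t ^ N) = (RtoC t ^ N)%C.
Proof.
  induction N as [|N IH]; [reflexivity|]; simpl; rewrite <- IH.
  unfold RtoC, Cmult; simpl; f_equal; ring.
Qed.

Lemma one_minus_mul_geom_partial w t N :
  ((1 - RtoC t * w) * geom_partial w t N)%C = (w - w * (RtoC t * w) ^ N)%C.
Proof.
  induction N as [|N IH]; simpl geom_partial; [simpl; ring|].
  rewrite Cmult_plus_distr_l, IH, RtoC_pow, !Cpow_mult_l, !Cpow_S; ring.
Qed.

Lemma Cmod_one_minus_ge w t : 0 <= t <= 1 -> 1 - Cmod w <= Cmod (1 - RtoC t * w).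
Proof.
  intros Ht.
  pose proof (Cmod_triangle (1 - RtoC t * w) (RtoC t * w)) as Htri.
  replace (1 - RtoC t * w + RtoC t * w)%C with (RtoC 1) in Htri by ring.
  rewrite Cmod_1, Cmod_mult, Cmod_R, Rabs_pos_eq in Htri by lra.
  pose proof (Cmod_ge_0 w); nra.
Qed.

Lemma fst_one_minus_gt0 w : Cmod w < 1 -> 0 < fst (1 - w)%C.
Proof.
  intros Hw; pose proof (re_le_Cmod w) as Ha.
  destruct w as [a b]; simpl in *.
  revert Ha; unfold Rabs; destruct (Rcase_abs a); lra.
Qed.

Lemma ln_sqrt x : 0 <= x -> ln (sqrt x) = ln x / 2.
Proof.
  intros [Hx|<-].
  - rewrite <- (sqrt_sqrt x) at 2 by lra.
    rewrite ln_mult by (apply sqrt_lt_R0; lra); field.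
  - rewrite sqrt_0; unfold ln; destruct (Rlt_dec 0 0) as [H0|_]; [exfalso; lra|field].
Qed.

Lemma is_derive_C_log_one_minus w t : 0 < fst (1 - RtoC t * w)%C ->
  is_derive_C (fun s => log_rhp (1 - RtoC s * w)) t (- w / (1 - RtoC t * w))%C.
Proof.
  destruct w as [a b]; intros Hpos.
  assert (Hre : forall s, fst (1 - RtoC s * (a, b))%C = 1 - s * a) by (intros; simpl; ring).
  assert (Him : forall s, snd (1 - RtoC s * (a, b))%C = - (s * b)) by (intros; simpl; ring).
  rewrite Hre in Hpos.
  assert (HQ : 0 < (1 - t * a) ^ 2 + (- (t * b)) ^ 2) by nra.
  replace (- (a, b) / (1 - RtoC t * (a, b)))%C
    with ((- a * (1 - t * a) + b * (t * b)) / ((1 - t * a) ^ 2 + (- (t * b)) ^ 2),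
          (- b * (1 - t * a) - a * (t * b)) / ((1 - t * a) ^ 2 + (- (t * b)) ^ 2)).
  2:{ unfold Cdiv; set (z := (1 - RtoC t * (a, b))%C).
      assert (Hz1 : fst z = 1 - t * a) by apply Hre.
      assert (Hz2 : snd z = - (t * b)) by apply Him.
      unfold Cmult, Cinv, Copp; cbn [fst snd]; rewrite Hz1, Hz2.
      f_equal; field; lra. }
  split; cbn [fst snd].
  - apply (is_derive_ext (fun s => ln ((1 - s * a) ^ 2 + (- (s * b)) ^ 2) / 2)).
    { intros s; unfold log_rhp, Cmod; cbn [fst]; rewrite Hre, Him.
      symmetry; apply ln_sqrt, Rplus_le_le_0_compat; apply pow2_ge_0. }
    auto_derive; [nra|].
    field; lra.
  - apply (is_derive_ext (fun s => atan (- (s * b) / (1 - s * a)))).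
    { intros s; unfold log_rhp, arg_rhp; cbn [snd]; now rewrite Hre, Him. }
    auto_derive; [lra|].
    unfold Rsqr; field; split; nra.
Qed.

Lemma log_partial_remainder_deriv_bound w t N : Cmod w < 1 -> 0 <= t <= 1 ->
  Cmod (- w / (1 - RtoC t * w) + geom_partial w t N)%C <= Cmod w ^ S N / (1 - Cmod w).
Proof.
  intros Hw Ht.
  pose proof (Cmod_one_minus_ge w t Ht) as Hlow; pose proof (Cmod_ge_0 w) as Hw0.
  assert (Hz : (1 - RtoC t * w)%C <> 0%C) by (intros E; rewrite E, Cmod_0 in Hlow; lra).
  replace (- w / (1 - RtoC t * w) + geom_partial w t N)%C
    with (- (w * (RtoC t * w) ^ N) / (1 - RtoC t * w))%C.
  2:{ assert (Hgeom : geom_partial w t N = ((w - w * (RtoC t * w) ^ N) / (1 - RtoC t * w))%C)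
        by (rewrite <- one_minus_mul_geom_partial; field; exact Hz).
      rewrite Hgeom; field; exact Hz. }
  unfold Cdiv; rewrite Cmod_mult, Cmod_opp, Cmod_inv by exact Hz.
  rewrite Cmod_mult, Cmod_pow, Cmod_mult, Cmod_R, Rabs_pos_eq by lra.
  simpl pow; unfold Rdiv.
  apply Rmult_le_compat.
  - apply Rmult_le_pos; [lra|]; apply pow_le; nra.
  - left; apply Rinv_0_lt_compat; lra.
  - apply Rmult_le_compat_l; [lra|]; apply pow_incr; split; nra.
  - apply Rinv_le_contravar; lra.
Qed.

Lemma log_partial_remainder w N : Cmod w < 1 ->
  Rabs (fst (Clog (1 - w) + log_partial w 1 N)%C) <= Cmod w ^ S N / (1 - Cmod w) /\
  Rabs (snd (Clog (1 - w) + log_partial w 1 N)%C) <= Cmod w ^ S N / (1 - Cmod w).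
Proof.
  intros Hw.
  destruct (components_le_of_derive_C_01
              (fun t => log_rhp (1 - RtoC t * w) + log_partial w t N)%C
              (fun t => - w / (1 - RtoC t * w) + geom_partial w t N)%C
              (Cmod w ^ S N / (1 - Cmod w))) as [Hre Him].
  - intros t Ht; apply is_derive_C_plus.
    + apply is_derive_C_log_one_minus, fst_one_minus_gt0.
      rewrite Cmod_mult, Cmod_R, Rabs_pos_eq by lra.
      pose proof (Cmod_ge_0 w); nra.
    + apply is_derive_C_log_partial.
  - intros t Ht; now apply log_partial_remainder_deriv_bound.
  - assert (Hw1 : (1 - RtoC 1 * w)%C = (1 - w)%C) by ring.
    assert (Hw0 : log_rhp (1 - RtoC 0 * w)%C = 0%C).
    { replace (1 - RtoC 0 * w)%C with (RtoC 1) by ring.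
      unfold log_rhp, arg_rhp; rewrite Cmod_1, ln_1; simpl.
      replace (0 / 1) with 0 by field; now rewrite atan_0. }
    rewrite Hw1, Hw0, log_partial_at_0, <- Clog_rhp in Hre, Him
      by now apply fst_one_minus_gt0.
    simpl in Hre, Him; rewrite !Rplus_0_r, !Rminus_0_r in *; split; assumption.
Qed.

Definition cis (x : R) : C := (cos x, sin x).

Lemma cis_pow x k : (cis x ^ k)%C = cis (INR k * x).
Proof.
  induction k as [|k IH].
  - unfold cis; simpl; now rewrite Rmult_0_l, cos_0, sin_0.
  - rewrite Cpow_S, IH, S_INR; unfold cis, Cmult; cbn [fst snd].
    replace ((INR k + 1) * x) with (x + INR k * x) by ring.
    rewrite cos_plus, sin_plus; f_equal; ring.
Qed.

Lemma Cmod_cis x : Cmod (cis x) = 1.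
Proof. unfold Cmod, cis; cbn [fst snd]; now rewrite Rplus_comm, sin_cos_sq, sqrt_1. Qed.

Lemma is_RInt_cos_mult k : is_RInt (fun x => cos (INR (S k) * x)) 0 (2 * PI) 0.
Proof.
  assert (Hk : INR (S k) <> 0) by (apply not_0_INR; discriminate).
  replace 0 with (minus (sin (INR (S k) * (2 * PI)) / INR (S k)) (sin (INR (S k) * 0) / INR (S k)))
    at 2.
  2:{ replace (INR (S k) * (2 * PI)) with (0 + 2 * INR (S k) * PI) by ring.
      rewrite sin_period, Rmult_0_r, sin_0; unfold minus, plus, opp; simpl; field; exact Hk. }
  apply (is_RInt_derive (fun x => sin (INR (S k) * x) / INR (S k))).
  - intros x _; auto_derive; [exact I|].
    change (match k with 0%nat => 1 | S _ => INR k + 1 end) with (INR (S k)).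
    field; exact Hk.
  - intros x _; apply (ex_derive_continuous (fun x => cos (INR (S k) * x))).
    auto_derive; exact I.
Qed.

Lemma is_RInt_scal_cos_mult (f : R -> R) c k :
  (forall x, f x = c * cos (INR (S k) * x)) -> is_RInt f 0 (2 * PI) 0.
Proof.
  intros Hf.
  pose proof (is_RInt_scal _ _ _ c _ (is_RInt_cos_mult k)) as H.
  unfold scal in H; simpl in H; unfold mult in H; simpl in H; rewrite Rmult_0_r in H.
  apply (is_RInt_ext _ _ _ _ _ (fun x _ => eq_sym (Hf x)) H).
Qed.

Fixpoint cos_partial (u : C) (N : nat) (x : R) : C :=
  match N with
  | O => 0%C
  | S N' => (cos_partial u N' x + RtoC (2 * cos (INR (S N') * x) / INR (S N')) * u ^ S N')%C
  end.

Lemma is_RInt_cos_partial u N :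
  is_RInt (V := C_R_CompleteNormedModule) (cos_partial u N) 0 (2 * PI) zero.
Proof.
  induction N as [|N IH].
  - pose proof (@is_RInt_const C_R_CompleteNormedModule 0 (2 * PI) zero) as H.
    rewrite (scal_zero_r (V := C_R_CompleteNormedModule)) in H; exact H.
  - assert (Hterm : is_RInt (V := C_R_CompleteNormedModule)
      (fun x => RtoC (2 * cos (INR (S N) * x) / INR (S N)) * u ^ S N)%C 0 (2 * PI) zero).
    { assert (HN : INR (S N) <> 0) by (apply not_0_INR; discriminate).
      destruct (u ^ S N)%C as [p q].
      apply (is_RInt_fct_extend_pair (U := R_NormedModule) (V := R_NormedModule)).
      - apply (is_RInt_scal_cos_mult _ (2 * p / INR (S N)) N).
        intros x; unfold Cmult, RtoC; cbn [fst snd]; field; exact HN.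
      - apply (is_RInt_scal_cos_mult _ (2 * q / INR (S N)) N).
        intros x; unfold Cmult, RtoC; cbn [fst snd]; field; exact HN. }
    pose proof (is_RInt_plus (V := C_R_CompleteNormedModule) _ _ _ _ _ _ IH Hterm) as H.
    rewrite (plus_zero_r (G := C_R_CompleteNormedModule)) in H; exact H.
Qed.

Lemma log_partial_cis u N x :
  (log_partial (u * cis x) 1 N + log_partial (u * cis (- x)) 1 N)%C = cos_partial u N x.
Proof.
  induction N as [|N IH]; [apply Cplus_0_l|].
  cbn [log_partial cos_partial]; rewrite <- IH, !Cpow_mult_l, !cis_pow, pow1.
  assert (HN : INR (S N) <> 0) by (apply not_0_INR; discriminate).
  generalize (log_partial (u * cis x) 1 N) (log_partial (u * cis (- x)) 1 N) (u ^ S N)%C.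
  intros [a1 b1] [a2 b2] [p q].
  replace (INR (S N) * - x) with (- (INR (S N) * x)) by ring.
  unfold cis; rewrite cos_neg, sin_neg.
  unfold Cplus, Cmult, RtoC; cbn [fst snd]; f_equal; field; exact HN.
Qed.

Lemma spectral_quadratic_factor u x :
  (1 - 2 * u + u * u + RtoC (2 * (1 - cos x)) * u)%C = ((1 - u * cis x) * (1 - u * cis (- x)))%C.
Proof.
  assert (Hprod : (cis x * cis (- x))%C = 1%C).
  { unfold cis, Cmult; cbn [fst snd]; rewrite cos_neg, sin_neg.
    pose proof (sin_cos_sq x); unfold RtoC; f_equal; nra. }
  assert (Hsum : (cis x + cis (- x))%C = RtoC (2 * cos x)).
  { unfold cis, Cplus, RtoC; cbn [fst snd]; rewrite cos_neg, sin_neg; f_equal; ring. }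
  transitivity (1 - u * (cis x + cis (- x)) + u * u * (cis x * cis (- x)))%C.
  - rewrite Hprod, Hsum; destruct u as [p q].
    unfold Cplus, Cminus, Cmult, Copp, RtoC; simpl; f_equal; ring.
  - ring.
Qed.

Lemma Clog_spectral_remainder u N x : Cmod u < 1 ->
  let e := (Clog (1 - 2 * u + u * u + RtoC (2 * (1 - cos x)) * u) + cos_partial u N x)%C in
  Rabs (fst e) <= 2 * (Cmod u ^ S N / (1 - Cmod u)) /\
  Rabs (snd e) <= 2 * (Cmod u ^ S N / (1 - Cmod u)).
Proof.
  intros Hu e.
  assert (Hmod : forall y, Cmod (u * cis y) = Cmod u)
    by (intros y; rewrite Cmod_mult, Cmod_cis; ring).
  destruct (log_partial_remainder (u * cis x) N) as [H1re H1im]; [now rewrite Hmod|].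
  destruct (log_partial_remainder (u * cis (- x)) N) as [H2re H2im]; [now rewrite Hmod|].
  rewrite !Hmod in *.
  subst e; rewrite spectral_quadratic_factor, Clog_mult_rhp, <- log_partial_cis
    by (apply fst_one_minus_gt0; now rewrite Hmod).
  revert H1re H1im H2re H2im.
  generalize (Clog (1 - u * cis x)) (Clog (1 - u * cis (- x)))
             (log_partial (u * cis x) 1 N) (log_partial (u * cis (- x)) 1 N).
  intros [c1 c2] [d1 d2] [e1 e2] [f1 f2]; cbn [fst snd Cplus]; intros.
  split.
  - replace (c1 + d1 + (e1 + f1)) with ((c1 + e1) + (d1 + f1)) by ring.
    eapply Rle_trans; [apply Rabs_triang|lra].
  - replace (c2 + d2 + (e2 + f2)) with ((c2 + e2) + (d2 + f2)) by ring.
    eapply Rle_trans; [apply Rabs_triang|lra].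
Qed.

Lemma ball_C_opp_r (z w : C) (eps : R) :
  Rabs (fst (z + w)%C) < eps -> Rabs (snd (z + w)%C) < eps ->
  @ball C_R_CompleteNormedModule z eps (scal (-1) w).
Proof.
  destruct z as [z1 z2], w as [w1 w2]; cbn [fst snd Cplus]; intros H1 H2.
  split; unfold ball; simpl; unfold AbsRing_ball, abs, minus, plus, opp, scal; simpl;
    unfold mult; simpl; rewrite <- Rabs_Ropp.
  - now replace (- (-1 * w1 + - z1)) with (z1 + w1) by ring.
  - now replace (- (-1 * w2 + - z2)) with (z2 + w2) by ring.
Qed.

(* The partial sums [- cos_partial u N x] converge uniformly to the integrand and
   all integrate to zero, so the integral is zero as well. *)
Lemma is_RInt_Clog_spectral u : Cmod u < 1 ->
  is_RInt (V := C_R_CompleteNormedModule)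
    (fun x => Clog (1 - 2 * u + u * u + RtoC (2 * (1 - cos x)) * u)%C) 0 (2 * PI) zero.
Proof.
  intros Hu.
  destruct (filterlim_RInt (U := nat) (V := C_R_CompleteNormedModule)
              (fun N x => scal (-1) (cos_partial u N x)) 0 (2 * PI) eventually _
              (fun x => Clog (1 - 2 * u + u * u + RtoC (2 * (1 - cos x)) * u)%C)
              (fun _ => zero)) as [l [Hl Hint]].
  - intros N; pose proof (is_RInt_scal _ _ _ (-1) _ (is_RInt_cos_partial u N)) as H.
    rewrite (scal_zero_r (V := C_R_CompleteNormedModule)) in H; exact H.
  - apply filterlim_locally; intros eps.
    pose proof (Cmod_ge_0 u) as Hr; set (r := Cmod u) in *.
    assert (Heps : 0 < eps * (1 - r) / 2).
    { pose proof (cond_pos eps); apply Rdiv_lt_0_compat; nra. }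
    destruct (pow_lt_1_zero r ltac:(rewrite Rabs_pos_eq; lra) _ Heps) as [N0 HN0].
    exists N0; intros N HN x.
    assert (Hbound : 2 * (r ^ S N / (1 - r)) < eps).
    { specialize (HN0 (S N) ltac:(lia)); rewrite Rabs_pos_eq in HN0 by (apply pow_le; lra).
      apply (Rmult_lt_reg_r (1 - r)); [lra|]; field_simplify; lra. }
    destruct (Clog_spectral_remainder u N x Hu) as [Hre Him]; fold r in Hre, Him.
    apply ball_C_opp_r; eapply Rle_lt_trans; eassumption.
  - replace l with (zero : C_R_CompleteNormedModule) in Hint; [exact Hint|].
    apply (filterlim_locally_unique (F := eventually) (fun _ : nat => zero)); [|exact Hl].
    apply filterlim_const.
Qed.

Lemma Cexp_0 : Cexp 0 = 1%C.
Proof. unfold Cexp, Re, Im, RtoC; simpl; rewrite exp_0, cos_0, sin_0; f_equal; ring. Qed.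

Lemma Cinv_Cexp z : Cinv (Cexp z) = Cexp (- z).
Proof.
  unfold Cexp, Cinv, Re, Im; cbn [fst snd Copp].
  rewrite exp_Ropp, cos_neg, sin_neg.
  pose proof (exp_pos (fst z)); pose proof (sin_cos_sq (snd z)).
  replace ((exp (fst z) * cos (snd z)) ^ 2 + (exp (fst z) * sin (snd z)) ^ 2)
    with (exp (fst z) ^ 2) by nra.
  f_equal; field; lra.
Qed.

Lemma filterlim_C_components (z : nat -> C) (l : C) :
  is_lim_seq (fun n => fst (z n)) (fst l) -> is_lim_seq (fun n => snd (z n)) (snd l) ->
  filterlim z eventually (locally l).
Proof.
  intros H1 H2; apply filterlim_locally; intros eps.
  apply is_lim_seq_spec in H1, H2.
  destruct (H1 eps) as [N1 HN1], (H2 eps) as [N2 HN2].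
  exists (max N1 N2); intros n Hn.
  split; unfold ball; simpl; unfold AbsRing_ball, abs, minus, plus, opp; simpl.
  - apply HN1; lia.
  - apply HN2; lia.
Qed.

Lemma filterlim_Cexp (z : nat -> C) (l : C) :
  is_lim_seq (fun n => fst (z n)) (fst l) -> is_lim_seq (fun n => snd (z n)) (snd l) ->
  filterlim (fun n => Cexp (z n)) eventually (locally (Cexp l)).
Proof.
  intros H1 H2.
  assert (Hexp := is_lim_seq_continuous exp _ _ (derivable_continuous _ derivable_exp _) H1).
  assert (Hcos := is_lim_seq_continuous cos _ _ (continuity_cos _) H2).
  assert (Hsin := is_lim_seq_continuous sin _ _ (continuity_sin _) H2).
  apply filterlim_C_components; unfold Cexp, Re, Im; cbn [fst snd].
  - exact (is_lim_seq_mult' _ _ _ _ Hexp Hcos).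
  - exact (is_lim_seq_mult' _ _ _ _ Hexp Hsin).
Qed.

Definition zeta_coef (N0f : nat -> nat) (u : C) (m : nat) : C :=
  match m with O => 0%C | S _ => (RtoC (INR (N0f m) / INR m) * Cpow u m)%C end.

Lemma ihara_zeta_Cexp {V : Type} (nb : V -> list V) eqb x0 u :
  ihara_zeta nb eqb x0 u = Cexp (CSeries (zeta_coef (Defs.N0 nb eqb x0) u)).
Proof. reflexivity. Qed.

Lemma ihara_zeta_Z u : ihara_zeta Z_nb Z.eqb 0%Z u = 1%C.
Proof.
  rewrite ihara_zeta_Cexp, <- Cexp_0; unfold CSeries; f_equal.
  assert (Hcoef : forall m, zeta_coef (Defs.N0 Z_nb Z.eqb 0%Z) u m = 0%C).
  { intros [|m]; [reflexivity|]; unfold zeta_coef; rewrite Z_N0; simpl INR.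
    unfold Rdiv; rewrite Rmult_0_l; apply Cmult_0_l. }
  rewrite (Series_ext _ (fun _ => 0 * 0)), (Series_ext (fun k => Im _) (fun _ => 0 * 0))
    by (intros k; rewrite Hcoef; simpl; ring).
  now rewrite Series_scal_l, Rmult_0_l.
Qed.

Lemma Rabs_Series_le_geom (f : nat -> R) B r : 0 <= r < 1 ->
  (forall m, Rabs (f m) <= B * r ^ m) -> Rabs (Series f) <= B / (1 - r).
Proof.
  intros Hr Hf.
  assert (Hgeom : ex_series (fun m => B * r ^ m)).
  { apply (ex_series_scal_l (V := R_NormedModule)), ex_series_geom.
    rewrite Rabs_pos_eq; lra. }
  assert (Habs : ex_series (fun m => Rabs (f m))).
  { apply (ex_series_le (V := R_CompleteNormedModule) _ (fun m => B * r ^ m)); [|exact Hgeom].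
    intros m; unfold norm; simpl; unfold abs; simpl; rewrite Rabs_Rabsolu; apply Hf. }
  eapply Rle_trans; [now apply Series_Rabs|].
  eapply Rle_trans; [apply (Series_le _ (fun m => B * r ^ m)); [|exact Hgeom]|].
  - intros m; split; [apply Rabs_pos|apply Hf].
  - rewrite Series_scal_l, Series_geom by (rewrite Rabs_pos_eq; lra); unfold Rdiv; lra.
Qed.

(* The weight [N0f m / m] is at most [2 / n]: it vanishes unless [m >= n]. *)
Lemma zeta_coef_bound (N0f : nat -> nat) u n m : (0 < n)%nat ->
  (forall k, (N0f (S k) <= 2)%nat) -> (forall k, (S k < n)%nat -> N0f (S k) = 0%nat) ->
  Rabs (fst (zeta_coef N0f u m)) <= 2 / INR n * Cmod u ^ m /\
  Rabs (snd (zeta_coef N0f u m)) <= 2 / INR n * Cmod u ^ m.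
Proof.
  intros Hn Hle2 Hshort.
  assert (Hn0 : 0 < INR n) by (apply lt_0_INR; lia).
  assert (Hbound0 : 0 <= 2 / INR n * Cmod u ^ m).
  { apply Rmult_le_pos; [apply Rlt_le, Rdiv_lt_0_compat; lra|apply pow_le, Cmod_ge_0]. }
  destruct m as [|k]; [unfold zeta_coef, RtoC; cbn [fst snd]; rewrite Rabs_R0; split; assumption|].
  assert (Hk : 0 < INR (S k)) by (apply lt_0_INR; lia).
  set (c := INR (N0f (S k)) / INR (S k)).
  assert (Hc : 0 <= c <= 2 / INR n).
  { split; [apply Rmult_le_pos; [apply pos_INR|apply Rlt_le, Rinv_0_lt_compat; lra]|].
    destruct (Nat.lt_ge_cases (S k) n) as [Hlt|Hge].
    - unfold c; rewrite Hshort by exact Hlt; simpl INR; unfold Rdiv; rewrite Rmult_0_l.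
      apply Rlt_le, Rdiv_lt_0_compat; lra.
    - apply le_INR in Hge; pose proof (le_INR _ _ (Hle2 k)) as H2; simpl in H2.
      apply Rmult_le_compat; [apply pos_INR|apply Rlt_le, Rinv_0_lt_compat; lra|lra|].
      apply Rinv_le_contravar; lra. }
  unfold zeta_coef; fold c; cbn [fst snd Cmult RtoC].
  rewrite !Rmult_0_l, Rminus_0_r, Rplus_0_r, !Rabs_mult, (Rabs_pos_eq c), <- Cmod_pow by lra.
  split; apply Rmult_le_compat; try apply Rabs_pos; try lra;
    [apply re_le_Cmod|apply im_le_Cmod].
Qed.

Lemma CSeries_zeta_coef_bound (N0f : nat -> nat) u n : (0 < n)%nat -> Cmod u < 1 ->
  (forall k, (N0f (S k) <= 2)%nat) -> (forall k, (S k < n)%nat -> N0f (S k) = 0%nat) ->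
  Rabs (fst (CSeries (zeta_coef N0f u))) <= 2 / (1 - Cmod u) * / INR n /\
  Rabs (snd (CSeries (zeta_coef N0f u))) <= 2 / (1 - Cmod u) * / INR n.
Proof.
  intros Hn Hu Hle2 Hshort.
  pose proof (Cmod_ge_0 u); assert (0 < INR n) by (apply lt_0_INR; lia).
  replace (2 / (1 - Cmod u) * / INR n) with ((2 / INR n) / (1 - Cmod u)) by (field; lra).
  split; apply Rabs_Series_le_geom; try lra; intros m;
    apply (zeta_coef_bound N0f u n m Hn Hle2 Hshort).
Qed.

Lemma is_lim_seq_0_of_bound (x : nat -> R) c :
  eventually (fun n => Rabs (x n) <= c * / INR n) -> is_lim_seq x 0.
Proof.
  intros Hx.
  assert (Hinv : forall d, is_lim_seq (fun n => d * / INR n) 0).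
  { intros d; replace (Finite 0) with (Finite (d * 0)) by (f_equal; ring).
    apply is_lim_seq_mult'; [apply is_lim_seq_const|].
    replace (Finite 0) with (Rbar_inv p_infty) by reflexivity.
    apply is_lim_seq_inv; [apply is_lim_seq_INR|discriminate]. }
  apply (is_lim_seq_le_le_loc (fun n => - c * / INR n) x (fun n => c * / INR n)).
  - destruct Hx as [N HN]; exists N; intros n Hn.
    specialize (HN n Hn); apply Rabs_le_between in HN; lra.
  - apply Hinv.
  - apply Hinv.
Qed.

Lemma cycle_zeta_log_lim u : Cmod u < 1 ->
  is_lim_seq (fun n => fst (CSeries (zeta_coef (Defs.N0 (cycle_nb n) Nat.eqb 0%nat) u))) 0 /\
  is_lim_seq (fun n => snd (CSeries (zeta_coef (Defs.N0 (cycle_nb n) Nat.eqb 0%nat) u))) 0.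
Proof.
  intros Hu.
  pose proof (fun n (Hn : (3 <= n)%nat) => CSeries_zeta_coef_bound _ u n ltac:(lia) Hu
                (cycle_N0_le2 n Hn) (cycle_N0_short n Hn)) as Hbound.
  split; apply (is_lim_seq_0_of_bound _ (2 / (1 - Cmod u))); exists 3%nat; intros n Hn;
    apply (Hbound n Hn).
Qed.

Theorem corollary2 (u : C) (hu : Cmod u < 1) :
  filterlim (fun n : nat => Cinv (ihara_zeta (cycle_nb n) Nat.eqb 0%nat u))
            eventually
            (locally (Cinv (ihara_zeta Z_nb Z.eqb 0%Z u)))
  /\ Cinv (ihara_zeta Z_nb Z.eqb 0%Z u)
     = Cexp (mu_integral (fun lam : R =>
          Clog (1 - 2 * u + u * u + RtoC lam * u)%C)).
Proof.
  assert (Hzeta_Z : Cinv (ihara_zeta Z_nb Z.eqb 0%Z u) = Cexp 0)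
    by now rewrite ihara_zeta_Z, <- Cexp_0, Cinv_Cexp, Copp_0.
  rewrite Hzeta_Z; split.
  - destruct (cycle_zeta_log_lim u hu) as [Hre Him].
    set (z n := CSeries (zeta_coef (Defs.N0 (cycle_nb n) Nat.eqb 0%nat) u)) in Hre, Him.
    apply (filterlim_ext (fun n => Cexp (- z n)));
      [intros n; now rewrite ihara_zeta_Cexp, Cinv_Cexp|].
    apply filterlim_Cexp; cbn [fst snd Copp RtoC]; rewrite <- Ropp_0.
    + exact (proj1 (is_lim_seq_opp _ 0) Hre).
    + exact (proj1 (is_lim_seq_opp _ 0) Him).
  - unfold mu_integral; rewrite (is_RInt_unique _ _ _ _ (is_RInt_Clog_spectral u hu)).
    f_equal; symmetry; apply (scal_zero_r (V := C_R_CompleteNormedModule)).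
Qed.
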